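(* Let $p\neq 2$ be a prime and $G=Z_{p^{\lambda_1}}\times\cdots\times Z_{p^{\lambda_n}}$ with $0<\lambda_1<\cdots<\lambda_n$. If $n\ge 3$ and $\lambda_n-\lambda_{n-1}=1$, then $J(G)$ has precisely two maximal down-set chains, namely $D_1(G)=\{J(i,1):i\in\{1,\dots,n\}\}$ and $$D_2'(G)=\{J(n-1,j):j\in\{1,\dots,\lambda_{n-1}-\lambda_{n-2}\}\}\cup\{J(n,j):j\in\{1,\dots,\lambda_{n-1}-\lambda_{n-2}+1\}\}.$$
   Context: Tuples are ordered componentwise; for $\mathbf 0\le\mathbf a\le(\lambda_1,\dots,\lambda_n)$, $T(\mathbf a)$ is the set of $(g_1,\dots,g_n)\in G$ with $|g_i|=p^{a_i}$, and $R(\mathbf a)=\bigcup_{\mathbf b\le\mathbf a}T(\mathbf b)$. For $i\in\{1,\dots,n\}$ and $j\in\{1,\dots,\lambda_i\}$, $J(i,j)=R(\mathbf a)$ where $a_k=j$ for $k\ge i$ and $a_k=\max\{0,\,j-(\lambda_i-\lambda_k)\}$ for $k<i$. $J(G)$ is the set of all $J(i,j)$, partially ordered by inclusion. A down set of a poset $P$ is a subset $X$ such that $x\le y\in X$ implies $x\in X$; a down-set chain is a subset that is both a chain and a down set; it is maximal if it is not contained in a strictly larger down-set chain. *)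

From mathcomp Require Import all_boot all_order all_algebra all_fingroup.
Set Implicit Arguments. Unset Strict Implicit. Unset Printing Implicit Defensive.

(* Paper indices 1..n are used for lam, a, i; the k-th component of an
   element of G (k : 'I_n, 0-based) corresponds to paper index k.+1. *)

Definition Gt (p n : nat) (lam : nat -> nat) : finType :=
  {dffun forall k : 'I_n, 'Z_(p ^ lam k.+1)}.

Definition Tset (p n : nat) (lam : nat -> nat) (b : 'I_n -> nat)
  : {set Gt p n lam} :=
  [set g : Gt p n lam | [forall k : 'I_n, #[g k]%g == p ^ b k]].

Definition Rset (p n : nat) (lam : nat -> nat) (a : nat -> nat)
  : {set Gt p n lam} :=
  \bigcup_(b : {ffun 'I_n -> 'I_(lam n).+1} | [forall k : 'I_n, b k <= a k.+1])
     Tset p lam (fun k => nat_of_ord (b k)).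

(* J(i,j); for k < i, lam_k <= lam_i so truncated subtraction gives
   max{0, j - (lam_i - lam_k)}. *)
Definition Jset (p n : nat) (lam : nat -> nat) (i j : nat) : {set Gt p n lam} :=
  Rset p n lam (fun k => if i <= k then j else j - (lam i - lam k)).

Definition JG (p n : nat) (lam : nat -> nat) : {set {set Gt p n lam}} :=
  [set S | [exists i : 'I_n, [exists j : 'I_(lam i.+1),
              S == Jset p n lam i.+1 j.+1]]].

Definition is_down_set_chain (T : finType) (P C : {set {set T}}) : Prop :=
  C \subset P /\
  (forall x y, x \in C -> y \in C -> (x \subset y) || (y \subset x)) /\
  (forall x y, x \in P -> y \in C -> x \subset y -> x \in C).

Definition is_maximal_down_set_chain (T : finType) (P C : {set {set T}}) : Prop :=
  is_down_set_chain P C /\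
  forall C', is_down_set_chain P C' -> C \subset C' -> C' = C.

Definition D1 (p n : nat) (lam : nat -> nat) : {set {set Gt p n lam}} :=
  [set S | [exists i : 'I_n, S == Jset p n lam i.+1 1]].

Definition D2' (p n : nat) (lam : nat -> nat) : {set {set Gt p n lam}} :=
  [set S | [exists j : 'I_(lam n.-1 - lam n.-2),
              S == Jset p n lam n.-1 j.+1]]
  :|: [set S | [exists j : 'I_(lam n.-1 - lam n.-2).+1,
              S == Jset p n lam n j.+1]].

From mathcomp Require Import all_boot all_order all_algebra all_fingroup all_solvable.
From mathcomp Require Import zify.

Set Implicit Arguments.
Unset Strict Implicit.
Unset Printing Implicit Defensive.

(* Inclusion between the sets R(a) is the componentwise order on exponent
   tuples.  Hence, with a = J(n,2) and b = J(n-2,1), every J(i,j) outside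
   D_1 (that is, j >= 2) contains a and every J(i,j) outside D_2' contains b,
   while no member of D_1 contains a, no member of D_2' contains b, and a, b
   are incomparable.  Since lam_n = lam_(n-1) + 1, D_2' is a chain
   interleaving J(n,_) and J(n-1,_), so D_1 and D_2' are down-set chains; a
   down-set chain containing a cannot contain b and so lies in D_2', any
   other one lies in D_1. *)

Lemma order_Zp1X_dvd (m e : nat) :
  1 < m -> e %| m -> #[(Zp1 : 'Z_m) ^+ e]%g = m %/ e.
Proof.
move=> m_gt1 e_dvd_m; rewrite orderXgcd order_Zp1 Zp_cast //.
by rewrite (gcdn_idPr e_dvd_m).
Qed.

Lemma order_Zp1X_pexp (p l e : nat) : prime p -> 0 < l -> e <= l ->
  #[(Zp1 : 'Z_(p ^ l)) ^+ (p ^ (l - e))]%g = p ^ e.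
Proof.
move=> p_pr l_gt0 le_el; have p_gt1 := prime_gt1 p_pr.
rewrite order_Zp1X_dvd.
- by rewrite -{1}(subnK le_el) expnD mulKn // expn_gt0 ltnW.
- by rewrite -(exp1n l) ltn_exp2r // -lt0n.
- by rewrite dvdn_exp2l // leq_subr.
Qed.

Lemma Rset_subset (p n : nat) (lam a a' : nat -> nat) :
  (forall k, 0 < k <= n -> a k <= a' k) -> Rset p n lam a \subset Rset p n lam a'.
Proof.
move=> le_aa'; apply/subsetP=> g /bigcupP [b le_ba Tg]; apply/bigcupP.
exists b => //; apply/forallP=> k.
by apply: leq_trans (forallP le_ba k) (le_aa' _ _); rewrite ltn_ord.
Qed.

(* The element whose k-th component is a generator of the subgroup of order
   p^(a k) lies in R(a) but outside R(a') as soon as a' k0 < a k0. *)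
Lemma Rset_not_subset (p n : nat) (lam a a' : nat -> nat) : prime p ->
  (forall k, 0 < k <= n -> [/\ 0 < lam k, lam k <= lam n & a k <= lam k]) ->
  forall k0, 0 < k0 <= n -> a' k0 < a k0 ->
  ~~ (Rset p n lam a \subset Rset p n lam a').
Proof.
move=> p_pr bounds k0 k0_in lt_a'a.
pose g : Gt p n lam :=
  [ffun k : 'I_n => ((Zp1 : 'Z_(p ^ lam k.+1)) ^+ (p ^ (lam k.+1 - a k.+1)))%g].
have bk (k : 'I_n) := bounds k.+1 (ltn_ord k).
have order_g (k : 'I_n) : #[g k]%g = p ^ a k.+1.
  by have [lam_gt0 _ le_alam] := bk k; rewrite ffunE order_Zp1X_pexp.
have Rg : g \in Rset p n lam a.
  apply/bigcupP; exists [ffun k : 'I_n => (inord (a k.+1) : 'I_(lam n).+1)].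
    by apply/forallP=> k; rewrite ffunE /= inordK //; have [] := bk k; lia.
  rewrite inE; apply/forallP=> k; rewrite order_g ffunE /= inordK //.
  by have [] := bk k; lia.
apply/negP=> /subsetP /(_ g Rg) /bigcupP [b le_ba]; rewrite inE => /forallP Tg.
have k0_lt_n : k0.-1 < n by lia.
have := Tg (Ordinal k0_lt_n); rewrite order_g /= prednK; last by lia.
rewrite eqn_exp2l ?prime_gt1 // => /eqP E.
by have := forallP le_ba (Ordinal k0_lt_n); rewrite /= prednK; lia.
Qed.

Lemma strict_incr_gap (n : nat) (lam : nat -> nat) :
  (forall i, 1 <= i < n -> lam i < lam i.+1) ->
  forall x y, 1 <= x -> x <= y <= n -> lam x + (y - x) <= lam y.
Proof.
move=> incr x y x_gt0; elim: y => [|y IHy] /andP [le_xy le_yn]; first by lia.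
case: (ltngtP x y.+1) le_xy => // [lt_xy _|<- _]; last by lia.
rewrite ltnS in lt_xy; have := IHy; rewrite lt_xy ltnW //.
by have := incr y; lia.
Qed.

Section TwoMaximalDownSetChains.
Variables (T : finType) (P : {set {set T}}).

Definition covers (D : {set {set T}}) (c : {set T}) : Prop :=
  forall x, x \in P -> x \in D \/ c \subset x.

Definition is_chain (D : {set {set T}}) : Prop :=
  forall x y, x \in D -> y \in D -> (x \subset y) || (y \subset x).

Lemma covered_down_set_chain (D : {set {set T}}) (c : {set T}) :
  D \subset P -> is_chain D -> covers D c ->
  (forall y, y \in D -> ~~ (c \subset y)) -> is_down_set_chain P D.
Proof.
move=> DP chainD coverD cD; split=> //; split=> // x y xP yD xy.
have [//|cx] := coverD x xP.
by have := cD y yD; rewrite (subset_trans cx xy).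
Qed.

Lemma down_set_chain_sub_cover (C D : {set {set T}}) (c : {set T}) :
  is_down_set_chain P C -> covers D c -> c \in P -> c \notin C -> C \subset D.
Proof.
move=> [CP [_ downC]] coverD cP cC; apply/subsetP=> x xC.
have [//|cx] := coverD x (subsetP CP x xC).
by rewrite (downC c x cP xC cx) in cC.
Qed.

Variables (D1 D2 : {set {set T}}) (a b : {set T}).
Hypotheses (D1P : D1 \subset P) (D2P : D2 \subset P)
  (chainD1 : is_chain D1) (chainD2 : is_chain D2)
  (aP : a \in P) (bP : b \in P)
  (ab_incomparable : ~~ ((a \subset b) || (b \subset a)))
  (coverD1 : covers D1 a) (coverD2 : covers D2 b)
  (D1_not_above_a : forall y, y \in D1 -> ~~ (a \subset y))
  (D2_not_above_b : forall y, y \in D2 -> ~~ (b \subset y)).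

Let dscD1 : is_down_set_chain P D1.
Proof. exact: covered_down_set_chain coverD1 D1_not_above_a. Qed.

Let dscD2 : is_down_set_chain P D2.
Proof. exact: covered_down_set_chain coverD2 D2_not_above_b. Qed.

Let b_in_D1 : b \in D1.
Proof. by have [//|ab] := coverD1 bP; move: ab_incomparable; rewrite ab. Qed.

Let a_in_D2 : a \in D2.
Proof. by have [//|ba] := coverD2 aP; move: ab_incomparable; rewrite ba orbT. Qed.

Let not_both (C : {set {set T}}) : is_down_set_chain P C ->
  a \in C -> b \notin C.
Proof.
move=> [_ [chainC _]] aC; apply/negP=> bC.
by move: ab_incomparable; rewrite chainC.
Qed.

Let maximal_of_cover (D : {set {set T}}) (c d : {set T}) :
  is_down_set_chain P D -> covers D c -> c \in P -> d \in D ->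
  (forall C, is_down_set_chain P C -> c \in C -> d \notin C) ->
  is_maximal_down_set_chain P D.
Proof.
move=> dscD coverD cP dD cd; split=> // C dscC DC; apply/eqP.
rewrite eqEsubset DC andbT; apply: (down_set_chain_sub_cover dscC coverD cP).
by apply/negP=> cC; have := cd C dscC cC; rewrite (subsetP DC d dD).
Qed.

Lemma two_maximal_down_set_chains :
  D1 != D2 /\ forall C, is_maximal_down_set_chain P C <-> C = D1 \/ C = D2.
Proof.
split.
  apply/negP=> /eqP D12; have := @D1_not_above_a a.
  by rewrite D12 a_in_D2 subxx => /(_ isT).
move=> C; split=> [[dscC maxC]|[]->].
- have [aC|aC] := boolP (a \in C).
    right; apply/esym/maxC=> //.
    exact: down_set_chain_sub_cover dscC coverD2 bP (not_both dscC aC).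
  left; apply/esym/maxC=> //.
  exact: down_set_chain_sub_cover dscC coverD1 aP aC.
- apply: maximal_of_cover dscD1 coverD1 aP b_in_D1 _ => C' dscC.
  exact: not_both.
- apply: maximal_of_cover dscD2 coverD2 bP a_in_D2 _ => C' dscC bC.
  by apply: contraTN bC; apply: not_both.
Qed.

End TwoMaximalDownSetChains.

Definition Jexp (lam : nat -> nat) (i j k : nat) : nat :=
  if i <= k then j else j - (lam i - lam k).

Section JGChains.
Variables (p n : nat) (lam : nat -> nat).
Hypotheses (p_pr : prime p) (lam1_gt0 : 0 < lam 1)
  (lam_incr : forall i, 1 <= i < n -> lam i < lam i.+1)
  (n_ge3 : 3 <= n) (lam_top : lam n - lam n.-1 = 1).

Local Notation J := (Jset p n lam).
Local Notation d := (lam n.-1 - lam n.-2).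

Ltac gap x y :=
  try (have : lam x + (y - x) <= lam y by apply: (strict_incr_gap lam_incr); lia);
  try (have : lam y + (x - y) <= lam x by apply: (strict_incr_gap lam_incr); lia).

Lemma lam_top_succ : lam n = (lam n.-1).+1.
Proof. by gap n.-1 n; lia. Qed.

Ltac Jexp_arith k :=
  rewrite /Jexp; have := lam_top_succ; repeat case: ifP => ?;
  gap k n; gap k n.-1; gap k n.-2; gap 1 k; gap 1 n; gap n.-2 n.-1; lia.

Lemma Jset_subset i j i' j' :
  (forall k, 0 < k <= n -> Jexp lam i j k <= Jexp lam i' j' k) ->
  J i j \subset J i' j'.
Proof. exact: Rset_subset. Qed.

Lemma Jset_not_subset i j i' j' k0 :
  (forall k, 0 < k <= n -> Jexp lam i j k <= lam k) ->
  0 < k0 <= n -> Jexp lam i' j' k0 < Jexp lam i j k0 ->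
  ~~ (J i j \subset J i' j').
Proof.
move=> le_lam k0_in lt_k0; apply: (Rset_not_subset p_pr _ k0_in lt_k0).
move=> k k_in; split; last exact: le_lam.
- by gap 1 k; lia.
- by gap k n; lia.
Qed.

Lemma Jset_in_JG i j : 0 < i <= n -> 0 < j <= lam i -> J i j \in JG p n lam.
Proof.
move=> i_in j_in; rewrite inE; apply/existsP.
have i_lt : i.-1 < n by lia.
have i_succ : i.-1.+1 = i by lia.
exists (Ordinal i_lt); apply/existsP.
have j_lt : j.-1 < lam (Ordinal i_lt).+1 by rewrite /= i_succ; lia.
by exists (Ordinal j_lt); rewrite /= !prednK //; lia.
Qed.

Lemma JG_Jset S : S \in JG p n lam ->
  exists i j, [/\ 0 < i <= n, 0 < j <= lam i & S = J i j].
Proof.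
rewrite inE => /existsP [i /existsP [j /eqP ->]].
by exists i.+1, j.+1; split => //; have := ltn_ord i; have := ltn_ord j; lia.
Qed.

Lemma Jset_in_D1 i : 0 < i <= n -> J i 1 \in D1 p n lam.
Proof.
move=> i_in; rewrite inE; apply/existsP.
have i_lt : i.-1 < n by lia.
by exists (Ordinal i_lt); rewrite /= prednK //; lia.
Qed.

Lemma D1_Jset S : S \in D1 p n lam -> exists2 i, 0 < i <= n & S = J i 1.
Proof.
by rewrite inE => /existsP [i /eqP ->]; exists i.+1 => //; have := ltn_ord i; lia.
Qed.

Lemma Jset_in_D2'_low j : 0 < j <= d -> J n.-1 j \in D2' p n lam.
Proof.
move=> j_in; rewrite !inE; apply/orP; left; apply/existsP.
have j_lt : j.-1 < d by lia.
by exists (Ordinal j_lt); rewrite /= prednK //; lia.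
Qed.

Lemma Jset_in_D2'_top j : 0 < j <= d.+1 -> J n j \in D2' p n lam.
Proof.
move=> j_in; rewrite !inE; apply/orP; right; apply/existsP.
have j_lt : j.-1 < d.+1 by lia.
by exists (Ordinal j_lt); rewrite /= prednK //; lia.
Qed.

Definition in_D2'_range i j :=
  (i = n.-1 /\ 0 < j <= d) \/ (i = n /\ 0 < j <= d.+1).

Lemma D2'_Jset S : S \in D2' p n lam ->
  exists i j, in_D2'_range i j /\ S = J i j.
Proof.
rewrite !inE => /orP [] /existsP [j /eqP ->].
  by exists n.-1, j.+1; split => //; left; have := ltn_ord j; lia.
by exists n, j.+1; split => //; right; have := ltn_ord j; lia.
Qed.

Lemma D1_sub_JG : D1 p n lam \subset JG p n lam.
Proof.
by apply/subsetP => _ /D1_Jset [i i_in ->]; apply: Jset_in_JG; gap 1 i; lia.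
Qed.

Lemma D2'_sub_JG : D2' p n lam \subset JG p n lam.
Proof.
apply/subsetP => _ /D2'_Jset [i [j [[[-> j_in]|[-> j_in]] ->]]];
  by apply: Jset_in_JG; lia.
Qed.

Lemma D1_covers : covers (JG p n lam) (D1 p n lam) (J n 2).
Proof.
move=> _ /JG_Jset [i [j [i_in j_in ->]]].
case: (ltngtP j 1) => [|j_gt1|->]; [lia| |by left; apply: Jset_in_D1].
right; apply: Jset_subset => k k_in; rewrite /Jexp.
by repeat case: ifP => ?; gap k i; gap i n; gap k n; lia.
Qed.

Lemma D2'_covers : covers (JG p n lam) (D2' p n lam) (J n.-2 1).
Proof.
move=> _ /JG_Jset [i [j [i_in j_in ->]]].
have [le_i_nm2|lt_nm2_i] := leqP i n.-2.
  right; apply: Jset_subset => k k_in; rewrite /Jexp.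
  by repeat case: ifP => ?; gap k n.-2; gap k i; lia.
have [->|i_neq] := eqVneq i n.-1.
  have [le_jd|lt_dj] := leqP j d; first by left; apply: Jset_in_D2'_low; lia.
  by right; apply: Jset_subset => k k_in; Jexp_arith k.
have -> : i = n by move: i_neq => /eqP; lia.
have [le_jd|lt_dj] := leqP j d.+1; first by left; apply: Jset_in_D2'_top; lia.
by right; apply: Jset_subset => k k_in; Jexp_arith k.
Qed.

Lemma D1_not_above_Jset_top y : y \in D1 p n lam -> ~~ (J n 2 \subset y).
Proof.
move=> /D1_Jset [i i_in ->]; apply: (@Jset_not_subset _ _ _ _ n).
- by move=> k k_in; Jexp_arith k.
- lia.
- by rewrite /Jexp leqnn; case: ifP => ?; lia.
Qed.

Lemma D2'_not_above_Jset_low y : y \in D2' p n lam -> ~~ (J n.-2 1 \subset y).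
Proof.
move=> /D2'_Jset [i [j [range_ij ->]]]; apply: (@Jset_not_subset _ _ _ _ n.-2).
- by move=> k k_in; Jexp_arith k.
- lia.
rewrite /Jexp leqnn; have := lam_top_succ.
by case: range_ij => [[-> ?]|[-> ?]]; case: ifP => ?; gap n.-2 n.-1; lia.
Qed.

Lemma D1_chain : is_chain (D1 p n lam).
Proof.
move=> _ _ /D1_Jset [i i_in ->] /D1_Jset [i' i'_in ->].
have [le_ii'|lt_i'i] := leqP i i'; apply/orP; [right|left];
  apply: Jset_subset => k k_in; rewrite /Jexp;
  by repeat case: ifP => ?; gap k i; gap k i'; lia.
Qed.

(* D2' is the chain J(n,1) < J(n-1,1) < J(n,2) < J(n-1,2) < ..., in which
   J(n,j) sits at position 2j-1 and J(n-1,j) at position 2j. *)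
Definition D2'_rank i j := if i == n then j.*2.-1 else j.*2.

Lemma D2'_rank_subset i j i' j' : in_D2'_range i j -> in_D2'_range i' j' ->
  D2'_rank i j <= D2'_rank i' j' -> J i j \subset J i' j'.
Proof.
have nm1_neq_n : (n.-1 == n) = false by apply/eqP; lia.
rewrite /D2'_rank => [[[-> ?]|[-> ?]] [[-> ?]|[-> ?]]];
  rewrite ?eqxx ?nm1_neq_n => le_rank;
  by apply: Jset_subset => k k_in; Jexp_arith k.
Qed.

Lemma D2'_chain : is_chain (D2' p n lam).
Proof.
move=> _ _ /D2'_Jset [i [j [range_ij ->]]] /D2'_Jset [i' [j' [range_ij' ->]]].
have [le_rank|lt_rank] := leqP (D2'_rank i j) (D2'_rank i' j');
  apply/orP; [left|right]; apply: D2'_rank_subset => //; exact: ltnW.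
Qed.

Lemma JG_maximal_down_set_chains :
  D1 p n lam != D2' p n lam /\
  forall C, is_maximal_down_set_chain (JG p n lam) C <->
    C = D1 p n lam \/ C = D2' p n lam.
Proof.
have top_in_D2' : J n 2 \in D2' p n lam by apply: Jset_in_D2'_top; gap n.-2 n.-1; lia.
have low_in_D1 : J n.-2 1 \in D1 p n lam by apply: Jset_in_D1; lia.
apply: two_maximal_down_set_chains D1_sub_JG D2'_sub_JG D1_chain D2'_chain
  (subsetP D2'_sub_JG _ top_in_D2') (subsetP D1_sub_JG _ low_in_D1) _
  D1_covers D2'_covers D1_not_above_Jset_top D2'_not_above_Jset_low.
by rewrite negb_or D1_not_above_Jset_top // D2'_not_above_Jset_low.
Qed.

End JGChains.

Theorem mainTheorem20 (p n : nat) (lam : nat -> nat) :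
  prime p -> p != 2 ->
  0 < lam 1 -> (forall i, 1 <= i < n -> lam i < lam i.+1) ->
  3 <= n -> lam n - lam n.-1 = 1 ->
  D1 p n lam != D2' p n lam /\
  forall C : {set {set Gt p n lam}},
    is_maximal_down_set_chain (JG p n lam) C <->
    (C = D1 p n lam \/ C = D2' p n lam).
Proof. by move=> p_pr _; apply: JG_maximal_down_set_chains. Qed.
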